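(* For every $i\geq 0$ we have $$T_i=(-1)^i\left(\omega_D-\frac{N_{i-1}}{c_{i+1}}\right)\quad\text{and}\quad N_i=\frac{\sqrt\Delta}{c_{i+1}}-\frac{N_{i-1}}{c_{i+1}^2}.$$
   Context: $D>1$ squarefree, $K=\mathbb{Q}(\sqrt D)$, $\Delta$ its discriminant, $\alpha'$ the Galois conjugate and $N(\alpha)=\alpha\alpha'$ the norm. $\omega_D=\sqrt D$ if $D\equiv 2,3\pmod 4$ and $\omega_D=\frac{1+\sqrt D}2$ if $D\equiv1\pmod4$; $\omega_D=[u_0;u_1,u_2,\dots]$ its continued fraction. Define $p_{-1}=1$, $q_{-1}=0$, $p_0=u_0$, $q_0=1$, $p_{i+1}=u_{i+1}p_i+p_{i-1}$, $q_{i+1}=u_{i+1}q_i+q_{i-1}$ (so $p_i/q_i=[u_0;u_1,\dots,u_i]$), and $\alpha_i=p_i-q_i\omega_D'\in\mathcal{O}_K$ for $i\geq-1$. Let $N_i=|N(\alpha_i)|$ (so $N_{-1}=1$). Define $T_i$ by $\alpha_{i-1}\alpha_i'=T_i+(-1)^{i+1}\omega_D$; explicitly $T_i=p_i(p_{i-1}-q_{i-1})-q_iq_{i-1}\frac{D-1}4$ if $D\equiv1\pmod4$ and $T_i=p_ip_{i-1}-Dq_iq_{i-1}$ if $D\equiv2,3\pmod4$. Finally $c_i=[u_i;u_{i+1},u_{i+2},\dots]$ (the complete quotients). *)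

From Stdlib Require Import Reals ZArith.
Open Scope R_scope.

Definition squarefree (D : Z) : Prop :=
  forall k : Z, Z.divide (k * k) D -> (k * k = 1)%Z.

Definition is1mod4 (D : Z) : bool := Z.eqb (Z.modulo D 4) 1.

Definition omega (D : Z) : R :=
  if is1mod4 D then (1 + sqrt (IZR D)) / 2 else sqrt (IZR D).
Definition omega' (D : Z) : R :=
  if is1mod4 D then (1 - sqrt (IZR D)) / 2 else - sqrt (IZR D).

Definition Kdisc (D : Z) : Z := if is1mod4 D then D else (4 * D)%Z.

(* floor; Int_part x = up x - 1 is the floor of x *)
Definition flr (x : R) : Z := Int_part x.

(* complete quotients c_i = [u_i; u_{i+1}, ...] of omega_D: c_0 = omega_D,
   c_{i+1} = 1 / (c_i - floor c_i) *)
Fixpoint cq (D : Z) (i : nat) : R :=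
  match i with
  | O => omega D
  | S n => 1 / (cq D n - IZR (flr (cq D n)))
  end.

Definition u (D : Z) (i : nat) : Z := flr (cq D i).

Fixpoint ppq (D : Z) (k : nat) : (Z * Z) * (Z * Z) :=
  (* returns ((p_{k-1}, q_{k-1}), (p_k, q_k)) *)
  match k with
  | O => ((1%Z, 0%Z), (u D 0, 1%Z))
  | S n =>
      let '((pm, qm), (p0, q0)) := ppq D n in
      ((p0, q0), (u D (S n) * p0 + pm, u D (S n) * q0 + qm)%Z)
  end.

Definition p (D : Z) (i : nat) : Z := fst (snd (ppq D i)).
Definition q (D : Z) (i : nat) : Z := snd (snd (ppq D i)).
(* p_{i-1}, q_{i-1} for i >= 0 (so pm D 0 = p_{-1} = 1, qm D 0 = q_{-1} = 0) *)
Definition pm (D : Z) (i : nat) : Z := fst (fst (ppq D i)).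
Definition qm (D : Z) (i : nat) : Z := snd (fst (ppq D i)).

(* alpha = a - b omega_D', its conjugate alpha' = a - b omega_D,
   absolute norm |N(alpha)| = |alpha alpha'| *)
Definition absnorm (D a b : Z) : R :=
  Rabs ((IZR a - IZR b * omega' D) * (IZR a - IZR b * omega D)).

(* N_i = |N(alpha_i)| and Nm D i = N_{i-1} (Nm D 0 = N_{-1} = 1) *)
Definition Nrm (D : Z) (i : nat) : R := absnorm D (p D i) (q D i).
Definition Nm (D : Z) (i : nat) : R := absnorm D (pm D i) (qm D i).

Definition T (D : Z) (i : nat) : Z :=
  if is1mod4 D then
    (p D i * (pm D i - qm D i) - q D i * qm D i * ((D - 1) / 4))%Z
  else (p D i * pm D i - D * q D i * qm D i)%Z.

(* Since √D is irrational, so is every complete quotient c_i; hence c_{i+1} > 1 and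
   ω = (c_{i+1} p_i + p_{i-1}) / (c_{i+1} q_i + q_{i-1}).  Put X = c_{i+1} q_i + q_{i-1} > 0.
   Together with p_i q_{i-1} - p_{i-1} q_i = (-1)^{i+1} this gives α_i' = (-1)^{i+1} / X and
   α_{i-1}' = (-1)^i c_{i+1} / X.  As ω' < 0, α_{i-1} and α_i are positive, so
   N_{i-1} = α_{i-1} c_{i+1} / X and N_i = α_i / X, and both identities follow from
   α_{i-1}α_i' = T_i - (-1)^i ω and α = α' + q √Δ. *)

From Stdlib Require Import Reals ZArith Lra Lia Psatz.
Open Scope R_scope.

Definition irrational (x : R) : Prop :=
  forall a b : Z, b <> 0%Z -> x * IZR b <> IZR a.

Lemma squarefree_neq_square_ratio D a b :
  (1 < D)%Z -> squarefree D -> b <> 0%Z -> (D * b * b <> a * a)%Z.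
Proof.
  intros HD Hsf Hb E.
  set (g := Z.gcd a b).
  assert (Hg : (0 < g)%Z).
  { assert (g <> 0)%Z by (intro G; apply Z.gcd_eq_0 in G; lia).
    pose proof (Z.gcd_nonneg a b); lia. }
  destruct (Z.gcd_divide_l a b) as [a' Ha], (Z.gcd_divide_r a b) as [b' Hb'].
  fold g in Ha, Hb'.
  assert (Hcop : Z.gcd a' b' = 1%Z).
  { replace a' with (a / g)%Z by (rewrite Ha, Z.div_mul; lia).
    replace b' with (b / g)%Z by (rewrite Hb', Z.div_mul; lia).
    apply Z.gcd_div_gcd; lia. }
  clearbody g.
  assert (E' : (D * b' * b' = a' * a')%Z).
  { subst a b. apply (Z.mul_reg_l _ _ (g * g)); nia. }
  assert (Hdvd : (b' | a')%Z).
  { apply (Z.gauss _ a'); [exists (D * b')%Z; lia | now rewrite Z.gcd_comm]. }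
  assert (Hunit : (b' | 1)%Z).
  { rewrite <- Hcop. apply Z.gcd_greatest; [exact Hdvd | apply Z.divide_refl]. }
  apply Z.divide_1_r in Hunit.
  assert (HDsq : D = (a' * a')%Z) by (destruct Hunit; subst; lia).
  assert (a' * a' = 1)%Z by (apply Hsf; rewrite <- HDsq; apply Z.divide_refl).
  lia.
Qed.

Lemma sqrt_squarefree_irrational D :
  (1 < D)%Z -> squarefree D -> irrational (sqrt (IZR D)).
Proof.
  intros HD Hsf a b Hb E.
  apply (squarefree_neq_square_ratio D a b HD Hsf Hb), eq_IZR.
  rewrite !mult_IZR, <- E.
  rewrite <- (sqrt_sqrt (IZR D)) at 1 by (apply IZR_le; lia).
  ring.
Qed.

Lemma omega_irrational D : (1 < D)%Z -> squarefree D -> irrational (omega D).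
Proof.
  intros HD Hsf a b Hb E.
  apply (sqrt_squarefree_irrational D HD Hsf (if is1mod4 D then 2 * a - b else a)%Z b Hb).
  unfold omega in E; destruct (is1mod4 D).
  - rewrite minus_IZR, mult_IZR, <- E. field.
  - exact E.
Qed.

Lemma irrational_neq_IZR x k : irrational x -> x <> IZR k.
Proof. intros Hx E. apply (Hx k 1%Z); [lia | rewrite E; ring]. Qed.

Lemma irrational_inv_sub_IZR x k :
  irrational x -> irrational (1 / (x - IZR k)).
Proof.
  intros Hx a b Hb E.
  assert (Hxk : x - IZR k <> 0) by (pose proof (irrational_neq_IZR x k Hx); lra).
  assert (Eb : IZR b = IZR a * (x - IZR k)) by (rewrite <- E; field; exact Hxk).
  assert (Ha : a <> 0%Z) by (intro; subst a; apply Hb, eq_IZR; lra).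
  apply (Hx (b + k * a)%Z a Ha).
  rewrite plus_IZR, mult_IZR, Eb. ring.
Qed.

Lemma frac_irrational_bounds x : irrational x -> 0 < x - IZR (flr x) < 1.
Proof.
  intro Hx. pose proof (irrational_neq_IZR x (flr x) Hx).
  unfold flr in *. destruct (base_Int_part x). lra.
Qed.

Lemma flr_ge1 x : 1 < x -> (1 <= flr x)%Z.
Proof.
  intro H. unfold flr. destruct (base_Int_part x).
  assert (0 < Int_part x)%Z by (apply lt_IZR; lra). lia.
Qed.

Lemma sqrt_IZR_gt1 D : (1 < D)%Z -> 1 < sqrt (IZR D).
Proof.
  intro HD. rewrite <- sqrt_1. apply sqrt_lt_1_alt. split; [lra | apply IZR_lt; lia].
Qed.

Lemma omega_gt1 D : (1 < D)%Z -> 1 < omega D.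
Proof. intro HD. pose proof (sqrt_IZR_gt1 D HD). unfold omega; destruct (is1mod4 D); lra. Qed.

Lemma omega'_lt0 D : (1 < D)%Z -> omega' D < 0.
Proof. intro HD. pose proof (sqrt_IZR_gt1 D HD). unfold omega'; destruct (is1mod4 D); lra. Qed.

Lemma omega_sub_omega' D : (1 < D)%Z -> omega D - omega' D = sqrt (IZR (Kdisc D)).
Proof.
  intro HD. unfold omega, omega', Kdisc. destruct (is1mod4 D).
  - field.
  - rewrite mult_IZR, sqrt_mult by (apply IZR_le; lia).
    replace (IZR 4) with (2 * 2) by (simpl; ring). rewrite sqrt_square by lra. ring.
Qed.

Lemma ppq_S D n : ppq D (S n) =
  ((p D n, q D n), (u D (S n) * p D n + pm D n, u D (S n) * q D n + qm D n)%Z).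
Proof. unfold p, q, pm, qm; simpl. now destruct (ppq D n) as [[a b] [c d]]. Qed.

Lemma p_S D n : p D (S n) = (u D (S n) * p D n + pm D n)%Z.
Proof. unfold p at 1; now rewrite ppq_S. Qed.

Lemma q_S D n : q D (S n) = (u D (S n) * q D n + qm D n)%Z.
Proof. unfold q at 1; now rewrite ppq_S. Qed.

Lemma pm_S D n : pm D (S n) = p D n.
Proof. unfold pm at 1; now rewrite ppq_S. Qed.

Lemma qm_S D n : qm D (S n) = q D n.
Proof. unfold qm at 1; now rewrite ppq_S. Qed.

Lemma convergent_det D n :
  IZR (p D n) * IZR (qm D n) - IZR (pm D n) * IZR (q D n) = - (-1) ^ n.
Proof.
  induction n as [|n IHn].
  - unfold p, q, pm, qm; simpl. ring.
  - rewrite p_S, q_S, pm_S, qm_S, !plus_IZR, !mult_IZR.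
    cbn [pow]. rewrite <- (Ropp_involutive ((-1) ^ n)), <- IHn. ring.
Qed.

Section CompleteQuotients.

Variable D : Z.
Hypothesis HD : (1 < D)%Z.
Hypothesis Hsf : squarefree D.

Lemma cq_irrational n : irrational (cq D n).
Proof.
  induction n as [|n IHn].
  - exact (omega_irrational D HD Hsf).
  - exact (irrational_inv_sub_IZR _ _ IHn).
Qed.

Lemma cq_gt1 n : 1 < cq D n.
Proof.
  destruct n as [|n]; [exact (omega_gt1 D HD) |].
  destruct (frac_irrational_bounds _ (cq_irrational n)) as [Hf0 Hf1].
  cbn [cq]. set (f := cq D n - IZR (flr (cq D n))) in *.
  apply (Rmult_lt_reg_l f); [exact Hf0 |].
  replace (f * (1 / f)) with 1 by (field; lra). lra.
Qed.

Lemma u_ge1 n : (1 <= u D n)%Z.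
Proof. exact (flr_ge1 _ (cq_gt1 n)). Qed.

Lemma cq_decomp n : cq D n = IZR (u D n) + / cq D (S n).
Proof.
  destruct (frac_irrational_bounds _ (cq_irrational n)).
  cbn [cq]. unfold u. field. lra.
Qed.

Lemma convergents_pos n :
  (1 <= p D n)%Z /\ (1 <= q D n)%Z /\ (1 <= pm D n)%Z /\ (0 <= qm D n)%Z.
Proof.
  induction n as [|n IHn].
  - pose proof (u_ge1 0). unfold p, q, pm, qm; simpl. lia.
  - pose proof (u_ge1 (S n)). rewrite p_S, q_S, pm_S, qm_S. nia.
Qed.

Lemma omega_convergent n :
  omega D * (cq D (S n) * IZR (q D n) + IZR (qm D n))
  = cq D (S n) * IZR (p D n) + IZR (pm D n).
Proof.
  induction n as [|n IHn].
  - pose proof (cq_gt1 1).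
    unfold p, q, pm, qm; simpl ppq; cbn [fst snd].
    change (omega D) with (cq D 0). rewrite (cq_decomp 0). field. lra.
  - pose proof (cq_gt1 (S n)) as Hc. pose proof (cq_gt1 (S (S n))) as Hc'.
    rewrite p_S, q_S, pm_S, qm_S, !plus_IZR, !mult_IZR.
    set (c := cq D (S n)) in *. set (c' := cq D (S (S n))) in *.
    transitivity (c' * (omega D * (c * IZR (q D n) + IZR (qm D n)))).
    + unfold c. rewrite (cq_decomp (S n)). fold c'. field. lra.
    + rewrite IHn. unfold c. rewrite (cq_decomp (S n)). fold c'. field. lra.
Qed.

End CompleteQuotients.

Lemma IZR_div4_pred D : (D mod 4 = 1)%Z -> IZR ((D - 1) / 4) = (IZR D - 1) / 4.
Proof.
  intro HD.
  assert (H4 : (4 * ((D - 1) / 4) = D - 1)%Z).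
  { pose proof (Z.div_mod (D - 1) 4 ltac:(lia)).
    pose proof (Z.mod_pos_bound (D - 1) 4 ltac:(lia)).
    pose proof (Z.div_mod D 4 ltac:(lia)). lia. }
  apply IZR_eq in H4. rewrite mult_IZR, minus_IZR in H4. simpl in H4. lra.
Qed.

Lemma T_conj_product D i : (1 < D)%Z ->
  IZR (T D i)
  = (IZR (pm D i) - IZR (qm D i) * omega' D) * (IZR (p D i) - IZR (q D i) * omega D)
    + (-1) ^ i * omega D.
Proof.
  intro HD.
  replace ((-1) ^ i)
    with (- (IZR (p D i) * IZR (qm D i) - IZR (pm D i) * IZR (q D i)))
    by (rewrite convergent_det; ring).
  assert (Hs : sqrt (IZR D) * sqrt (IZR D) = IZR D) by (apply sqrt_sqrt, IZR_le; lia).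
  unfold T, omega, omega'. destruct (is1mod4 D) eqn:E.
  - apply Z.eqb_eq in E.
    rewrite minus_IZR, !mult_IZR, minus_IZR, (IZR_div4_pred D E).
    set (s := sqrt (IZR D)) in *. clearbody s. rewrite <- Hs. field.
  - rewrite minus_IZR, !mult_IZR.
    set (s := sqrt (IZR D)) in *. clearbody s. rewrite <- Hs. ring.
Qed.

Section ConvergentNorms.

(* (P, Q, Pm, Qm, c, e) stand for (p_i, q_i, p_{i-1}, q_{i-1}, c_{i+1}, (-1)^i). *)
Variables w w' c P Q Pm Qm e : R.
Hypothesis Hdet : P * Qm - Pm * Q = - e.
Hypothesis He : Rabs e = 1.
Hypothesis Hc : 0 < c.
Hypothesis HX : 0 < c * Q + Qm.
Hypothesis Hw : w * (c * Q + Qm) = c * P + Pm.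
Hypothesis Halpha_prev : 0 <= Pm - Qm * w'.
Hypothesis Halpha : 0 <= P - Q * w'.

Lemma conj_eq : P - Q * w = - e / (c * Q + Qm).
Proof.
  assert (E : (P - Q * w) * (c * Q + Qm) = - e).
  { rewrite <- Hdet, Rmult_minus_distr_r, Rmult_assoc, Hw. ring. }
  rewrite <- E. field. lra.
Qed.

Lemma conj_prev_eq : Pm - Qm * w = e * c / (c * Q + Qm).
Proof.
  assert (E : (Pm - Qm * w) * (c * Q + Qm) = e * c).
  { replace e with (- (P * Qm - Pm * Q)) by lra.
    rewrite Rmult_minus_distr_r, Rmult_assoc, Hw. ring. }
  rewrite <- E. field. lra.
Qed.

Lemma norm_prev_eq :
  Rabs ((Pm - Qm * w') * (Pm - Qm * w)) = (Pm - Qm * w') * c / (c * Q + Qm).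
Proof.
  replace (Pm - Qm * w) with (e * (c / (c * Q + Qm)))
    by (rewrite conj_prev_eq; field; lra).
  assert (0 <= c / (c * Q + Qm)) by (apply Rlt_le, Rdiv_lt_0_compat; lra).
  rewrite !Rabs_mult, He, !Rabs_pos_eq by assumption. field. lra.
Qed.

Lemma norm_eq : Rabs ((P - Q * w') * (P - Q * w)) = (P - Q * w') / (c * Q + Qm).
Proof.
  replace (P - Q * w) with (- (e * / (c * Q + Qm))) by (rewrite conj_eq; field; lra).
  assert (0 <= / (c * Q + Qm)) by (apply Rlt_le, Rinv_0_lt_compat; lra).
  rewrite Rabs_mult, Rabs_Ropp, Rabs_mult, He, !Rabs_pos_eq by assumption.
  field. lra.
Qed.

Lemma T_identity :
  (Pm - Qm * w') * (P - Q * w) + e * w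
  = e * (w - Rabs ((Pm - Qm * w') * (Pm - Qm * w)) / c).
Proof. rewrite norm_prev_eq, conj_eq. field. lra. Qed.

Lemma N_identity :
  Rabs ((P - Q * w') * (P - Q * w))
  = (w - w') / c - Rabs ((Pm - Qm * w') * (Pm - Qm * w)) / c ^ 2.
Proof.
  rewrite norm_eq, norm_prev_eq.
  replace (P - Q * w') with (P - Q * w + Q * (w - w')) by ring.
  replace (Pm - Qm * w') with (Pm - Qm * w + Qm * (w - w')) by ring.
  rewrite conj_eq, conj_prev_eq. field. lra.
Qed.

End ConvergentNorms.

Theorem lemma4 (D : Z) (HD : (1 < D)%Z) (Hsf : squarefree D) (i : nat) :
  IZR (T D i) = (-1) ^ i * (omega D - Nm D i / cq D (S i)) /\
  Nrm D i = sqrt (IZR (Kdisc D)) / cq D (S i) - Nm D i / (cq D (S i)) ^ 2.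
Proof.
  destruct (convergents_pos D HD Hsf i) as (Hp & Hq & Hpm & Hqm).
  apply IZR_le in Hp, Hq, Hpm, Hqm.
  pose proof (cq_gt1 D HD Hsf (S i)).
  pose proof (omega'_lt0 D HD).
  unfold Nrm, Nm, absnorm.
  rewrite (T_conj_product D i HD), <- (omega_sub_omega' D HD).
  split; [apply T_identity | apply (N_identity _ _ _ _ _ _ _ ((-1) ^ i))];
    auto using convergent_det, pow_1_abs, omega_convergent; nra.
Qed.
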